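(* The topology of any first countable paratopological group $G$ is generated by a left-invariant $\overline{\mathsf{dist}}$-continuous quasi-pseudometric; if moreover $G$ is semiregular, this quasi-pseudometric can additionally be chosen right-continuous.
   Context: A paratopological group is a group with a topology making multiplication continuous. Semiregular: every neighborhood $O_x$ of $x$ contains $\mathrm{int}\,\overline{U_x}$ for some neighborhood $U_x$ of $x$. A quasi-pseudometric is $d:G\times G\to[0,\infty)$ with $d(x,x)=0$ and the triangle inequality; left-invariant if $d(zx,zy)=d(x,y)$ for all $x,y,z$; right-continuous if $y\mapsto d(x,y)$ is continuous for each $x$; $\overline{\mathsf{dist}}$-continuous if for every non-empty $A\subset G$ the function $x\mapsto\inf\{\varepsilon>0:x\in\overline{B_d(A,\varepsilon)}\}$ is continuous, where $B_d(A,\varepsilon)=\{y:\exists a\in A\ d(a,y)<\varepsilon\}$. $d$ generates the topology if the balls $B_d(x,\varepsilon)=\{y:d(x,y)<\varepsilon\}$ form a subbase of it. *)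

From HB Require Import structures.
From mathcomp Require Import all_boot all_order all_algebra.
From mathcomp Require Import all_classical all_reals all_analysis.
Set Implicit Arguments. Unset Strict Implicit. Unset Printing Implicit Defensive.
Import Order.TTheory GRing.Theory Num.Theory.
Import numFieldNormedType.Exports.
Local Open Scope classical_set_scope.
Local Open Scope ring_scope.

Section Defs.
Variable G : topologicalType.

Definition is_group (mul : G -> G -> G) (one : G) (inv : G -> G) : Prop :=
  (forall x y z, mul x (mul y z) = mul (mul x y) z) /\
  (forall x, mul one x = x) /\ (forall x, mul x one = x) /\
  (forall x, mul (inv x) x = one) /\ (forall x, mul x (inv x) = one).

Definition paratopological_group (mul : G -> G -> G) (one : G) (inv : G -> G) : Prop :=
  is_group mul one inv /\ continuous (fun p : G * G => mul p.1 p.2).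

Definition first_countable : Prop :=
  forall x : G, exists B : nat -> set G,
    (forall n, nbhs x (B n)) /\ (forall U, nbhs x U -> exists n, B n `<=` U).

Definition semiregular : Prop :=
  forall (x : G) (O : set G), nbhs x O ->
    exists U : set G, nbhs x U /\ interior (closure U) `<=` O.

Variable R : realType.

Definition quasi_pseudometric (d : G -> G -> R) : Prop :=
  (forall x y, 0 <= d x y) /\ (forall x, d x x = 0) /\
  (forall x y z, d x z <= d x y + d y z).

Definition left_invariant (mul : G -> G -> G) (d : G -> G -> R) : Prop :=
  forall x y z, d (mul z x) (mul z y) = d x y.

Definition qpm_right_continuous (d : G -> G -> R) : Prop :=
  forall x, continuous (fun y => d x y).

Definition qball (d : G -> G -> R) (x : G) (eps : R) : set G :=
  [set y | d x y < eps].

Definition qball_set (d : G -> G -> R) (A : set G) (eps : R) : set G :=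
  [set y | exists2 a, A a & d a y < eps].

Definition cdist (d : G -> G -> R) (A : set G) (x : G) : R :=
  inf [set eps | 0 < eps /\ closure (qball_set d A eps) x].

Definition cdist_continuous (d : G -> G -> R) : Prop :=
  forall A : set G, A !=set0 -> continuous (cdist d A).

(* the balls B_d(x, eps) (eps > 0) form a subbase of the topology of G:
   open sets are exactly the unions of finite intersections of balls *)
Definition generates_topology (d : G -> G -> R) : Prop :=
  forall A : set G, open A <->
    (forall x, A x -> exists s : seq (G * R),
       (forall p, p \in s -> 0 < p.2) /\
       (forall p, p \in s -> qball d p.1 p.2 x) /\
       (forall y, (forall p, p \in s -> qball d p.1 p.2 y) -> A y)).

End Defs.

From mathcomp Require Import all_boot all_order all_algebra.
From mathcomp Require Import all_classical all_reals all_analysis lra zify.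
Set Implicit Arguments. Unset Strict Implicit. Unset Printing Implicit Defensive.
Import Order.TTheory GRing.Theory Num.Theory.
Import numFieldNormedType.Exports.
Local Open Scope classical_set_scope.
Local Open Scope ring_scope.

(* Both metrics have the form d(x, y) = f(x^-1 y) for a prenorm f: a subadditive
   f >= 0 with f(1) = 0 whose sublevel sets [f < e] are open and form a base at
   the unit. First countability yields neighbourhoods U_n of the unit with
   U_0 = G and U_(n+1)^3 <= U_n forming a base, and Kakutani's
   f(g) = inf {2^-n_1 + ... + 2^-n_k | g in U_n_1 ... U_n_k} is a prenorm.
   For any prenorm, the closure distance to A is lower semicontinuous because
   the sets cl B_d(A, e) are closed, and upper semicontinuous because the right
   translation by x^-1 y is continuous and moves B_d(A, e) into
   B_d(A, e + d(x, y)). If G is semiregular, f is replaced by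
   f'(g) = inf {e | g in cl [f < e]}: this is again a prenorm (semiregularity
   makes its sublevel sets small), and it is continuous, whence the right
   continuity of its metric. *)

Lemma inf_addS (R : realType) (A B C : set R) :
  has_inf A -> has_inf B -> has_lbound C ->
  (forall a b, A a -> B b -> C (a + b)) -> inf C <= inf A + inf B.
Proof.
move=> hA hB hC ABC; rewrite -inf_sumE //; apply: lb_le_inf.
  have [[a Aa] _] := hA; have [[b Bb] _] := hB.
  by exists (a + b), a => //; exists b.
by move=> _ [a Aa [b Bb <-]]; apply: ge_inf => //; apply: ABC.
Qed.

Lemma closure_subset_preimage (T U : topologicalType) (h : T -> U)
    (S : set T) (B : set U) :
  continuous h -> S `<=` h @^-1` B -> closure S `<=` h @^-1` closure B.
Proof.
move=> hc SB x clS C /hc/clS[s [Ss Cs]].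
by exists (h s); split => //; apply: SB.
Qed.

Lemma nbhs_forall_in (T : topologicalType) (I : eqType) (s : seq I)
    (B : I -> set T) (x : T) :
  (forall i, i \in s -> nbhs x (B i)) ->
  nbhs x [set y | forall i, i \in s -> B i y].
Proof.
elim: s => [|i s IH] sB; first by apply: filterS filterT => y _ i; rewrite in_nil.
apply: filterS (filterI (sB i (mem_head _ _)) (IH _)) => [y [Biy Bsy] j|j js].
  by rewrite inE => /predU1P[->|/Bsy].
by apply: sB; rewrite inE js orbT.
Qed.

Section ClosureDistance.
Variables (T : topologicalType) (R : realType) (d : T -> T -> R).

Lemma qball_setS (A : set T) e e' :
  e <= e' -> qball_set d A e `<=` qball_set d A e'.
Proof. by move=> ee' y [a Aa ay]; exists a => //; apply: lt_le_trans ee'. Qed.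

Lemma cdist_le (A : set T) y e :
  0 < e -> closure (qball_set d A e) y -> cdist d A y <= e.
Proof. by move=> e0 cl; apply: ge_inf; [exists 0 => r [/ltW]|]. Qed.

Hypothesis d_ge0 : forall x y, 0 <= d x y.
Variable A : set T.
Hypothesis A0 : A !=set0.

Lemma has_inf_cdist_radii y :
  has_inf [set e | 0 < e /\ closure (qball_set d A e) y].
Proof.
split; last by exists 0 => e [/ltW].
have [a Aa] := A0; exists (d a y + 1); split; first by have := d_ge0 a y; lra.
by apply: subset_closure; exists a => //; rewrite ltrDl.
Qed.

Lemma cdist_ge0 y : 0 <= cdist d A y.
Proof. by apply: lb_le_inf (has_inf_cdist_radii y).1 _ => e [/ltW]. Qed.

Lemma cdist_lt y r : cdist d A y < r ->
  exists2 e, 0 < e /\ closure (qball_set d A e) y & e < r.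
Proof. exact: inf_lt (has_inf_cdist_radii y).1. Qed.

Lemma cdist_lsc x eps : 0 < eps ->
  \forall y \near x, cdist d A x - eps < cdist d A y.
Proof.
move=> eps0; set s := cdist d A x - eps / 2.
have [s_le0|s_gt0] := leP s 0.
  by apply: nearW => y; have := cdist_ge0 y; rewrite /s in s_le0; lra.
have notclx : ~ closure (qball_set d A s) x.
  by move=> /(cdist_le s_gt0); rewrite /s; lra.
have : nbhs x (~` closure (qball_set d A s)).
  by apply: open_nbhs_nbhs; split => //; rewrite openC; apply: closed_closure.
apply: filterS => y noty; suff : s <= cdist d A y by rewrite /s; lra.
apply: lb_le_inf (has_inf_cdist_radii y).1 _ => e [_ cle]; rewrite leNgt.
by apply/negP => es; apply/noty/(closureS (qball_setS (ltW es))).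
Qed.

End ClosureDistance.

Section Weights.
Variable R : realType.

Definition weight (n : nat) : R := (2^-1) ^+ n.

Lemma weight_gt0 n : 0 < weight n.
Proof. by apply: exprn_gt0; rewrite invr_gt0 ltr0n. Qed.

Lemma weightS n : weight n.+1 = weight n / 2.
Proof. by rewrite /weight exprS mulrC. Qed.

Lemma weight_lt e : 0 < e -> exists n, weight n < e.
Proof.
move=> e0; have /archi_boundP : 0 <= e^-1 by rewrite invr_ge0 ltW.
set k := Num.Def.archi_bound _ => ltk; exists k.
have lt2k : (k%:R : R) < 2 ^+ k by rewrite -natrX ltr_nat ltn_expl.
by rewrite /weight exprVn invf_plt ?posrE ?exprn_gt0 //; apply: lt_trans lt2k.
Qed.

Lemma weight_le_ltn m n : weight n <= weight m.+1 -> (m < n)%N.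
Proof.
apply: contraTT; rewrite -leqNgt -ltNge => nm.
by rewrite /weight ltr_iXn2l ?invf_lt1 ?ltr1n ?invr_gt0 ?ltr0n.
Qed.

Lemma weight_sum_ge0 (s : seq nat) : 0 <= \sum_(n <- s) weight n.
Proof. by apply: sumr_ge0 => n _; apply/ltW/weight_gt0. Qed.

Lemma split_weight_sum (s : seq nat) c : 0 <= c < \sum_(n <- s) weight n ->
  exists s1 n s2, [/\ s = s1 ++ n :: s2, \sum_(k <- s1) weight k <= c
                     & c < \sum_(k <- s1) weight k + weight n].
Proof.
elim: s c => [|n s IH] c; first by rewrite big_nil; lra.
rewrite big_cons => /andP[c0 cs]; have [cn|nc] := ltP c (weight n).
  by exists [::], n, s; rewrite big_nil add0r.
have [|s1 [k [s2 [-> s1c cs1]]]] := IH (c - weight n); first by apply/andP; lra.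
by exists (n :: s1), k, s2; rewrite big_cons; split => //; lra.
Qed.

End Weights.

Section ParatopologicalGroup.
Variables (G : topologicalType) (mul : G -> G -> G) (one : G) (inv : G -> G).
Hypothesis pG : paratopological_group mul one inv.

Let mulA : forall x y z, mul x (mul y z) = mul (mul x y) z := pG.1.1.
Let mul1g : forall x, mul one x = x := pG.1.2.1.
Let mulg1 : forall x, mul x one = x := pG.1.2.2.1.
Let mulVg : forall x, mul (inv x) x = one := pG.1.2.2.2.1.
Let mulgV : forall x, mul x (inv x) = one := pG.1.2.2.2.2.
Let continuous_mul : continuous (fun p : G * G => mul p.1 p.2) := pG.2.

Lemma mulKg x y : mul (inv x) (mul x y) = y.
Proof. by rewrite mulA mulVg mul1g. Qed.

Lemma mulKVg x y : mul x (mul (inv x) y) = y.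
Proof. by rewrite mulA mulgV mul1g. Qed.

Lemma invg1 : inv one = one.
Proof. by rewrite -[inv one]mulg1 mulVg. Qed.

Lemma invMg x y : inv (mul x y) = mul (inv y) (inv x).
Proof.
have xyK : mul (mul x y) (mul (inv y) (inv x)) = one.
  by rewrite -mulA (mulA y) mulgV mul1g mulgV.
by rewrite -[inv (mul x y)]mulg1 -xyK mulA mulVg mul1g.
Qed.

Lemma continuous_lmul a : continuous (mul a).
Proof.
move=> y B /(@continuous_mul (a, y))[[P Q] /= [nP nQ] PQ].
by apply: filterS nQ => z Qz; apply: (PQ (a, z)); split => //; apply: nbhs_singleton.
Qed.

Lemma continuous_rmul a : continuous (mul^~ a).
Proof.
move=> y B /(@continuous_mul (y, a))[[P Q] /= [nP nQ] PQ].
by apply: filterS nP => z Pz; apply: (PQ (z, a)); split => //; apply: nbhs_singleton.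
Qed.

Lemma nbhs1_mul_split W : nbhs one W ->
  exists2 V, nbhs one V & forall a b, V a -> V b -> W (mul a b).
Proof.
move=> nW; have : nbhs (one, one) [set p : G * G | W (mul p.1 p.2)].
  by apply: (@continuous_mul (one, one)); rewrite /= mulg1.
case=> [[P Q] /= [nP nQ] PQ]; exists (P `&` Q); first exact: filterI.
by move=> a b [Pa _] [_ Qb]; apply: (PQ (a, b)).
Qed.

Lemma nbhs1_mul3_split W : nbhs one W ->
  exists2 V, nbhs one V & forall a b c, V a -> V b -> V c -> W (mul a (mul b c)).
Proof.
move=> /nbhs1_mul_split[V1 nV1 V1W]; have [V nV VV1] := nbhs1_mul_split nV1.
exists V => // a b c Va Vb Vc; apply: V1W (VV1 _ _ Vb Vc).
by rewrite -(mulg1 a); apply: VV1 => //; apply: nbhs_singleton.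
Qed.

Variable R : realType.

Definition qpm_of (f : G -> R) : G -> G -> R := fun x y => f (mul (inv x) y).

Lemma qpm_of_right_continuous f :
  continuous f -> qpm_right_continuous (qpm_of f).
Proof.
by move=> fc x y; exact: continuous_comp (@continuous_lmul (inv x) y) (fc _).
Qed.

Record prenorm (f : G -> R) : Prop := Prenorm {
  prenorm_ge0 : forall g, 0 <= f g;
  prenorm1 : f one = 0;
  prenorm_mul : forall g h, f (mul g h) <= f g + f h;
  open_prenorm_lt : forall e, open [set g | f g < e];
  prenorm_lt_sub : forall O, nbhs one O ->
    exists2 e, 0 < e & [set g | f g < e] `<=` O }.

Section QpmOfPrenorm.
Variable f : G -> R.
Hypothesis fP : prenorm f.

Lemma qpm_of_qpm : quasi_pseudometric (qpm_of f).
Proof.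
split; first by move=> x y; apply: (prenorm_ge0 fP).
split=> [x|x y z]; first by rewrite /qpm_of mulVg (prenorm1 fP).
rewrite /qpm_of -[in X in f X](mulKVg y z) mulA; exact: (prenorm_mul fP).
Qed.

Let qpm_of_ge0 := (qpm_of_qpm).1.

Lemma qpm_of_left_invariant : left_invariant mul (qpm_of f).
Proof. by move=> x y z; rewrite /qpm_of invMg -mulA mulKg. Qed.

Lemma open_qball x e : open (qball (qpm_of f) x e).
Proof.
rewrite openE => y xy.
have : nbhs (mul (inv x) y) [set g | f g < e].
  by apply: open_nbhs_nbhs; split; [apply: (open_prenorm_lt fP)|].
exact: (@continuous_lmul (inv x) y).
Qed.

Lemma qball_center x e : 0 < e -> qball (qpm_of f) x e x.
Proof. by rewrite /qball /qpm_of /= mulVg (prenorm1 fP). Qed.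

Lemma nbhs_qball x e : 0 < e -> nbhs x (qball (qpm_of f) x e).
Proof.
by move=> e0; apply: open_nbhs_nbhs; split; [apply: open_qball|apply: qball_center].
Qed.

Lemma qpm_of_generates_topology : generates_topology (qpm_of f).
Proof.
move=> A; split.
  rewrite openE => oA x Ax.
  have : nbhs one [set g | A (mul x g)].
    by apply: (@continuous_lmul x one); rewrite mulg1; apply: oA.
  move=> /(prenorm_lt_sub fP)[e e0 eA].
  exists [:: (x, e)]; split=> [p|]; first by rewrite inE => /eqP ->.
  split=> [p|y xy]; first by rewrite inE => /eqP ->; apply: qball_center.
  by rewrite -(mulKVg x y); apply: eA; apply: (xy (x, e)); rewrite inE.
move=> Aballs; rewrite openE => x /Aballs[s [s_gt0 [sx sA]]].
apply: filterS sA (nbhs_forall_in _) => p ps.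
by apply: open_nbhs_nbhs; split; [apply: open_qball|apply: sx].
Qed.

Lemma qpm_of_cdist_usc (A : set G) x eps : A !=set0 -> 0 < eps ->
  \forall y \near x, cdist (qpm_of f) A y < cdist (qpm_of f) A x + eps.
Proof.
move=> A0 eps0; have eps2_gt0 : 0 < eps / 2 by lra.
have [e [e0 clx] ltex] : exists2 e, 0 < e /\ closure (qball_set (qpm_of f) A e) x
    & e < cdist (qpm_of f) A x + eps / 2 by apply: cdist_lt => //; lra.
apply: filterS (nbhs_qball x eps2_gt0) => y xy.
have cly : closure (qball_set (qpm_of f) A (e + eps / 2)) y.
  rewrite -{1}(mulKVg x y).
  apply: (closure_subset_preimage (h := mul^~ _) (@continuous_rmul _) _ clx).
  move=> z [a Aa az]; exists a => //; rewrite /qpm_of mulA.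
  apply: le_lt_trans (prenorm_mul fP _ _) _.
  by move: az xy; rewrite /qpm_of /qball /=; lra.
by have := cdist_le (_ : 0 < e + eps / 2) cly; lra.
Qed.

Lemma qpm_of_cdist_continuous : cdist_continuous (qpm_of f).
Proof.
move=> A A0 x; apply/cvgrPdist_lt => eps eps0.
apply: filterS (filterI (qpm_of_cdist_usc x A0 eps0)
                        (cdist_lsc qpm_of_ge0 A0 x eps0)).
by move=> y [/= ub lb]; rewrite ltr_distlC ub lb.
Qed.

Lemma qpm_of_prenorm_spec :
  quasi_pseudometric (qpm_of f) /\ left_invariant mul (qpm_of f) /\
  generates_topology (qpm_of f) /\ cdist_continuous (qpm_of f).
Proof.
split; first exact: qpm_of_qpm.
split; first exact: qpm_of_left_invariant.
by split; [exact: qpm_of_generates_topology|exact: qpm_of_cdist_continuous].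
Qed.

Definition closure_prenorm : G -> R := cdist (qpm_of f) [set one].

Lemma qball_set_one e : qball_set (qpm_of f) [set one] e = [set g | f g < e].
Proof.
apply/seteqP; split=> [g [_ -> //]|g ge]; first by rewrite /qpm_of invg1 mul1g.
by exists one; rewrite // /qpm_of invg1 mul1g.
Qed.

Let one_neq0 : [set one] !=set0. Proof. by exists one. Qed.

Lemma continuous_closure_prenorm : continuous closure_prenorm.
Proof. exact: (qpm_of_cdist_continuous one_neq0). Qed.

Lemma closure_prenorm1 : closure_prenorm one = 0.
Proof.
apply/eqP; rewrite eq_le cdist_ge0 // andbT; apply/ler_addgt0Pr => e e0.
rewrite add0r; apply: cdist_le => //; apply: subset_closure.
by rewrite qball_set_one /= (prenorm1 fP).
Qed.

Lemma closure_sublevel_mul a b g h :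
  closure [set x | f x < a] g -> closure [set x | f x < b] h ->
  closure [set x | f x < a + b] (mul g h).
Proof.
move=> cla clb.
have clgh k : f k < a -> closure [set x | f x < a + b] (mul k h).
  move=> ka; apply: (closure_subset_preimage (@continuous_lmul k) _ clb) => x /= xb.
  by apply: le_lt_trans (prenorm_mul fP _ _) _; lra.
have := closure_subset_preimage (@continuous_rmul h) clgh cla.
by rewrite -(closure_id _).1 //; apply: closed_closure.
Qed.

Lemma closure_prenorm_mul g h :
  closure_prenorm (mul g h) <= closure_prenorm g + closure_prenorm h.
Proof.
apply: inf_addS; [exact: has_inf_cdist_radii|exact: has_inf_cdist_radii|
                  by exists 0 => e [/ltW]|].
move=> a b [a0 cla] [b0 clb]; split; first exact: addr_gt0.
by move: cla clb; rewrite !qball_set_one; apply: closure_sublevel_mul.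
Qed.

Lemma closure_prenorm_lt_sub O : semiregular G -> nbhs one O ->
  exists2 e, 0 < e & [set g | closure_prenorm g < e] `<=` O.
Proof.
move=> sr /sr[V [nV clVO]]; have [e e0 eV] := prenorm_lt_sub fP nV.
have e2_gt0 : 0 < e / 2 by lra.
exists (e / 2) => // g /(cdist_lt qpm_of_ge0 one_neq0)[a [a0 cla] ae].
apply: clVO; apply: filterS (nbhs_qball g e2_gt0) => y gy.
rewrite -(mulKVg g y).
apply: (closure_subset_preimage (@continuous_rmul _) _ cla) => x.
rewrite qball_set_one /= => xa; apply: eV; apply: le_lt_trans (prenorm_mul fP _ _) _.
by move: gy; rewrite /qball /qpm_of /=; lra.
Qed.

Lemma prenorm_closure_prenorm : semiregular G -> prenorm closure_prenorm.
Proof.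
move=> sr; split=> [g||g h|e|O]; [exact: cdist_ge0|exact: closure_prenorm1|
  exact: closure_prenorm_mul| |exact: closure_prenorm_lt_sub].
rewrite -[X in open X]/(closure_prenorm @^-1` [set r | r < e]).
by apply: open_comp => [x _|]; [apply: continuous_closure_prenorm|apply: open_lt].
Qed.

End QpmOfPrenorm.

Record cube_nbhs_base (U : nat -> set G) : Prop := CubeNbhsBase {
  cube_nbhs_base0 : U 0%N = setT;
  cube_nbhs_base_nbhs : forall n, nbhs one (U n);
  cube_nbhs_base_cube : forall n a b c,
    U n.+1 a -> U n.+1 b -> U n.+1 c -> U n (mul a (mul b c));
  cube_nbhs_base_sub : forall O, nbhs one O -> exists n, U n `<=` O }.

Lemma exists_cube_nbhs_base : first_countable G -> exists U, cube_nbhs_base U.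
Proof.
move=> /(_ one)[B [nB Bsub]].
have splitW W : exists V, nbhs one W ->
    nbhs one V /\ forall a b c, V a -> V b -> V c -> W (mul a (mul b c)).
  have [/nbhs1_mul3_split[V nV VW]|nW] := pselect (nbhs one W); first by exists V.
  by exists W.
have [F FP] := choice splitW.
pose U := fix U n := if n is k.+1 then F (U k `&` B k) else setT.
have nU n : nbhs one (U n).
  by elim: n => [|n IH]; [apply: filterT|apply: (FP _ (filterI IH (nB n))).1].
have cubeU n a b c :
    U n.+1 a -> U n.+1 b -> U n.+1 c -> (U n `&` B n) (mul a (mul b c)).
  exact: (FP _ (filterI (nU n) (nB n))).2.
exists U; split=> // [n a b c Ua Ub Uc|O /Bsub[n BO]].
  exact: (cubeU n a b c Ua Ub Uc).1.
exists n.+1 => a Ua; apply: BO.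
have U1 : U n.+1 one by apply: nbhs_singleton.
by have := (cubeU n a one one Ua U1 U1).2; rewrite !mulg1.
Qed.

Section Kakutani.
Variable U : nat -> set G.
Hypothesis UP : cube_nbhs_base U.

Lemma cube_nbhs_base1 n : U n one.
Proof. exact: nbhs_singleton (cube_nbhs_base_nbhs UP n). Qed.

Lemma cube_nbhs_base_decr m n : (m <= n)%N -> U n `<=` U m.
Proof.
move=> /subnK <-; elim: (n - m)%N => [|k IH] //= a Ua; apply: IH.
by rewrite -(mulg1 a) -(mulg1 one); apply: (cube_nbhs_base_cube UP) => //;
  apply: cube_nbhs_base1.
Qed.

Fixpoint prodU (s : seq nat) : set G :=
  if s is n :: t then [set g | exists a b, [/\ U n a, prodU t b & g = mul a b]]
  else [set one].

Lemma prodU_catP s t g :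
  prodU (s ++ t) g <-> exists a b, [/\ prodU s a, prodU t b & g = mul a b].
Proof.
elim: s g => [|n s IH] g /=.
  split=> [tg|[a [b [-> tb ->]]]]; last by rewrite mul1g.
  by exists one, g; rewrite mul1g.
split.
  move=> [u [c [Uu /IH[a [b [sa tb ->]]] ->]]].
  by exists (mul u a), b; split=> //; exists u, a.
move=> [_ [b [[u [a [Uu sa ->]]] tb ->]]].
by exists u, (mul a b); split=> //; apply/IH; exists a, b.
Qed.

(* Split s where its partial weight sums cross half the total: both outer parts
   weigh at most weight m.+2, and the middle factor lies in U m.+1. *)
Lemma prodU_sub s m :
  \sum_(n <- s) weight R n <= weight R m.+1 -> prodU s `<=` U m.
Proof.
have [k] := ubnP (size s); elim: k => // k IH in s m *; rewrite ltnS => sk sm g.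
case: s => [|n0 s0] in sk sm *; first by move=> /= ->; apply: cube_nbhs_base1.
set s := n0 :: s0 in sk sm *; set S := \sum_(n <- s) weight R n in sm.
have S_gt0 : 0 < S.
  by rewrite /S big_cons; have := weight_sum_ge0 R s0; have := weight_gt0 R n0; lra.
have [s1 [n [s2 [es s1S Ss1]]]] : exists s1 n s2, [/\ s = s1 ++ n :: s2,
    \sum_(k <- s1) weight R k <= S / 2
    & S / 2 < \sum_(k <- s1) weight R k + weight R n].
  by apply: split_weight_sum; rewrite -/S; apply/andP; lra.
have SE : S = \sum_(k <- s1) weight R k + weight R n + \sum_(k <- s2) weight R k.
  by rewrite /S es big_cat big_cons /=; lra.
have sz : size s = (size s1 + (size s2).+1)%N by rewrite es size_cat.
have wm := weightS R m.+1; have s1_ge0 := weight_sum_ge0 R s1.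
have s2_ge0 := weight_sum_ge0 R s2.
rewrite es => /prodU_catP[a [c [s1a [u [b [Uu s2b ->]]] ->]]].
apply: (cube_nbhs_base_cube UP).
- by apply: (IH s1) s1a; [move: sk; rewrite sz; lia|lra].
- by apply: (cube_nbhs_base_decr (weight_le_ltn _)) Uu; lra.
- by apply: (IH s2) s2b; [move: sk; rewrite sz; lia|lra].
Qed.

Let weight_sums g := [set \sum_(n <- s) weight R n | s in [set s | prodU s g]].

Definition kakutani_norm g : R := inf (weight_sums g).

Let has_inf_weight_sums g : has_inf (weight_sums g).
Proof.
split; last by exists 0 => _ [s _ <-]; apply: weight_sum_ge0.
exists (\sum_(n <- [:: 0%N]) weight R n), [:: 0%N] => //=.
by exists g, one; rewrite mulg1 (cube_nbhs_base0 UP).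
Qed.

Lemma kakutani_norm_le s g :
  prodU s g -> kakutani_norm g <= \sum_(n <- s) weight R n.
Proof. by move=> sg; apply: ge_inf; [apply: (has_inf_weight_sums g).2|exists s]. Qed.

Lemma kakutani_norm_lt g e : kakutani_norm g < e ->
  exists2 s, prodU s g & \sum_(n <- s) weight R n < e.
Proof. by move=> /(inf_lt (has_inf_weight_sums g).1)[_ [s sg <-] se]; exists s. Qed.

Lemma kakutani_norm_ge0 g : 0 <= kakutani_norm g.
Proof.
apply: lb_le_inf (has_inf_weight_sums g).1 _ => _ [s _ <-].
exact: weight_sum_ge0.
Qed.

Lemma kakutani_norm1 : kakutani_norm one = 0.
Proof.
apply/eqP; rewrite eq_le kakutani_norm_ge0 andbT.
by have := kakutani_norm_le (s := [::]) (erefl one); rewrite big_nil.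
Qed.

Lemma kakutani_norm_mul g h :
  kakutani_norm (mul g h) <= kakutani_norm g + kakutani_norm h.
Proof.
apply: inf_addS; [exact: has_inf_weight_sums|exact: has_inf_weight_sums|
                  exact: (has_inf_weight_sums _).2|].
move=> _ _ [s sg <-] [t th <-]; rewrite -big_cat; exists (s ++ t) => //.
by apply/prodU_catP; exists g, h.
Qed.

Lemma open_kakutani_norm_lt e : open [set g | kakutani_norm g < e].
Proof.
rewrite openE /interior => g /kakutani_norm_lt[s sg se] /=.
have [m wm] : exists m, weight R m < e - \sum_(n <- s) weight R n.
  by apply: weight_lt; lra.
have nU : nbhs (mul (inv g) g) (U m).
  by rewrite mulVg; apply: cube_nbhs_base_nbhs.
have nUg : nbhs g [set y | U m (mul (inv g) y)] := @continuous_lmul (inv g) g _ nU.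
apply: filterS nUg => y Uy.
have /kakutani_norm_le : prodU (s ++ [:: m]) y.
  apply/prodU_catP; exists g, (mul (inv g) y); rewrite mulKVg; split=> //.
  by exists (mul (inv g) y), one; rewrite mulg1.
by rewrite big_cat big_seq1 /=; lra.
Qed.

Lemma kakutani_norm_lt_sub O : nbhs one O ->
  exists2 e, 0 < e & [set g | kakutani_norm g < e] `<=` O.
Proof.
move=> /(cube_nbhs_base_sub UP)[n nO]; exists (weight R n.+1) => [|g].
  exact: weight_gt0.
by move=> /kakutani_norm_lt[s sg /ltW/prodU_sub sU]; apply/nO/sU.
Qed.

Lemma prenorm_kakutani_norm : prenorm kakutani_norm.
Proof.
split; [exact: kakutani_norm_ge0|exact: kakutani_norm1|exact: kakutani_norm_mul|
        exact: open_kakutani_norm_lt|exact: kakutani_norm_lt_sub].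
Qed.

End Kakutani.

Lemma exists_prenorm : first_countable G -> exists f : G -> R, prenorm f.
Proof.
move=> /exists_cube_nbhs_base[U UP].
by exists (kakutani_norm U); apply: prenorm_kakutani_norm.
Qed.

End ParatopologicalGroup.

Theorem corollary7p6 (R : realType) (G : topologicalType)
    (mul : G -> G -> G) (one : G) (inv : G -> G) :
  paratopological_group mul one inv -> first_countable G ->
  (exists d : G -> G -> R,
      quasi_pseudometric d /\ left_invariant mul d /\
      generates_topology d /\ cdist_continuous d) /\
  (semiregular G ->
    exists d : G -> G -> R,
      quasi_pseudometric d /\ left_invariant mul d /\
      generates_topology d /\ cdist_continuous d /\ qpm_right_continuous d).
Proof.
move=> pG /(exists_prenorm pG R)[f fP]; split.
  by exists (qpm_of mul inv f); exact: (qpm_of_prenorm_spec pG fP).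
move=> sr; have f'P := prenorm_closure_prenorm pG fP sr.
exists (qpm_of mul inv (closure_prenorm mul one inv f)).
have [? [? [? ?]]] := qpm_of_prenorm_spec pG f'P.
do !split=> //.
exact: (qpm_of_right_continuous pG (continuous_closure_prenorm pG fP)).
Qed.
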